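(* Let $\mathbb{K}$ be a countable set, $m\ge2$ an even integer, $\mathcal{X}$ a nonempty set, and $(\phi_k)_{k\in\mathbb{K}}$ functions $\phi_k\colon\mathcal{X}\to\mathbb{R}$ with $(\phi_k(x))_{k\in\mathbb{K}}\in\ell^m(\mathbb{K})$ for every $x\in\mathcal{X}$. Let $K(x'_1,\dots,x'_m)=\sum_{k\in\mathbb{K}}\phi_k(x'_1)\cdots\phi_k(x'_m)$ and suppose that $K(x,\dots,x)>0$ for every $x\in\mathcal{X}$. Define $$\tilde K\colon\mathcal{X}^m\to\mathbb{R},\qquad \tilde K(x'_1,\dots,x'_m)=\frac{K(x'_1,\dots,x'_m)}{K(x'_1,\dots,x'_1)^{1/m}\cdots K(x'_m,\dots,x'_m)^{1/m}}.$$ Then there exists a family $(\tilde\phi_k)_{k\in\mathbb{K}}$ of functions $\tilde\phi_k\colon\mathcal{X}\to\mathbb{R}$ with $(\tilde\phi_k(x))_{k\in\mathbb{K}}\in\ell^m(\mathbb{K})$ for every $x$, such that $\tilde K(x'_1,\dots,x'_m)=\sum_{k\in\mathbb{K}}\tilde\phi_k(x'_1)\cdots\tilde\phi_k(x'_m)$ for all $(x'_1,\dots,x'_m)\in\mathcal{X}^m$; moreover (i) $\tilde K(x,\dots,x)=1$ for every $x\in\mathcal{X}$, and (ii) $|\tilde K(x'_1,\dots,x'_m)|\le1$ for every $(x'_1,\dots,x'_m)\in\mathcal{X}^m$.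
   Context: $\ell^m(\mathbb{K})$ is the space of real families with $\sum_k|w_k|^m<\infty$. *)

From HB Require Import structures.
From mathcomp Require Import all_boot all_order all_algebra.
From mathcomp Require Import all_classical all_reals all_analysis.
Set Implicit Arguments. Unset Strict Implicit. Unset Printing Implicit Defensive.
Import Order.TTheory GRing.Theory Num.Theory.
Local Open Scope classical_set_scope.
Local Open Scope ring_scope.

Definition ellm (R : realType) (T : choiceType) (m : nat) (w : T -> R) : Prop :=
  (\esum_(k in [set: T]) ((`|w k| ^+ m)%:E) < +oo)%E.

(* unconditional sum of a real family over T (positive part minus negative
   part); this is the usual value of sum_k w_k for absolutely summable w *)
Definition csum (R : realType) (T : choiceType) (w : T -> R) : R :=
  fine (\esum_(k in [set: T]) ((Num.max (w k) 0)%:E)) -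
  fine (\esum_(k in [set: T]) ((Num.max (- w k) 0)%:E)).

Definition kern (R : realType) (T : choiceType) (X : Type) (m : nat)
  (phi : T -> X -> R) (xs : 'I_m -> X) : R :=
  csum (fun k => \prod_(i < m) phi k (xs i)).

Definition kern_tilde (R : realType) (T : choiceType) (X : Type) (m : nat)
  (phi : T -> X -> R) (xs : 'I_m -> X) : R :=
  kern phi xs /
  \prod_(i < m) (kern phi (fun _ : 'I_m => xs i) `^ (m%:R^-1)).

From HB Require Import structures.
From mathcomp Require Import all_boot all_order all_algebra.
From mathcomp Require Import all_classical all_reals all_analysis.
From mathcomp Require Import lra.
Import Order.TTheory GRing.Theory Num.Theory.
Local Open Scope classical_set_scope.
Local Open Scope ring_scope.

(* Since m is even, K(x,...,x) = sum_k |phi_k(x)|^m > 0.  Dividing every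
   phi_k(x) by the m-th root s(x) of this number gives features of unit
   l^m-norm, and by homogeneity their kernel is exactly K~.  For unit-norm
   features, AM-GM bounds |prod_i phi~_k(x_i)| by the mean of the
   |phi~_k(x_i)|^m; summing over k bounds the absolute series of K~ by the
   mean of m unit norms, i.e. by 1. *)

Lemma esumZl (R : realType) (T : choiceType) (D : set T) (c : R)
    (a : T -> \bar R) :
  0 <= c -> (forall i, 0 <= a i)%E ->
  (\esum_(i in D) (c%:E * a i) = c%:E * \esum_(i in D) a i)%E.
Proof.
move=> c0 a0; rewrite /esum -ereal_supZl //; last first.
  by apply/set0P; exists 0%E; exists set0; [exact: fsets_set0 | rewrite fsbig_set0].
congr ereal_sup; apply/seteqP; split => x /=.
- move=> [A [fA sA] <-]; exists (\sum_(i \in A) a i)%E; first by exists A.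
  by rewrite !fsbig_finite // ge0_sume_distrr.
- move=> [y [A [fA sA] <-] <-]; exists A => //.
  by rewrite !fsbig_finite // ge0_sume_distrr.
Qed.

Lemma fine_pEFinMl (R : realType) (c : R) (e : \bar R) : 0 < c ->
  fine (c%:E * e)%E = c * fine e.
Proof.
move=> c0; case: e => [r| |] //=.
- by rewrite muleC gt0_mulye ?lte_fin // mulr0.
- by rewrite muleC gt0_mulNye ?lte_fin // mulr0.
Qed.

Lemma csumZ (R : realType) (T : choiceType) (c : R) (w : T -> R) : 0 < c ->
  csum (fun k => c * w k) = c * csum w.
Proof.
move=> c0; rewrite /csum mulrBr -!fine_pEFinMl // -!esumZl ?ltW // => [|k|k];
  last 2 first.
- by rewrite lee_fin le_max lexx orbT.
- by rewrite lee_fin le_max lexx orbT.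
congr (fine _ - fine _); apply: eq_esum => k _;
  by rewrite -EFinM -?mulrN maxr_pMr ?ltW // mulr0.
Qed.

Lemma csum_ge0E (R : realType) (T : choiceType) (w : T -> R) :
  (forall k, 0 <= w k) ->
  csum w = fine (\esum_(k in [set: T]) (w k)%:E)%E.
Proof.
move=> w0; rewrite /csum.
rewrite (eq_esum (fun k _ => congr1 EFin (max_l (w0 k)))).
rewrite [X in _ - fine X]esum1 ?subr0 // => k _.
by rewrite max_r // oppr_le0.
Qed.

Lemma normr_csum_le (R : realType) (T : choiceType) (w : T -> R) (c : R) :
  (\esum_(k in [set: T]) (`|w k|)%:E <= c%:E)%E -> `|csum w| <= c.
Proof.
move=> wc.
have part_bound (v : T -> R) : (forall k, `|v k| = `|w k|) ->
    0 <= fine (\esum_(k in [set: T]) (Num.max (v k) 0)%:E)%E <= c.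
  move=> vw.
  have ge0 : (0 <= \esum_(k in [set: T]) (Num.max (v k) 0)%:E)%E.
    by apply: esum_ge0 => k _; rewrite lee_fin le_max lexx orbT.
  have lec : (\esum_(k in [set: T]) (Num.max (v k) 0)%:E <= c%:E)%E.
    apply: le_trans wc; apply: le_esum => k _.
    by rewrite lee_fin ge_max normr_ge0 -vw ler_norm.
  move: ge0 lec; case: (\esum_(_ in _) _)%E => [r| |] //=.
  by rewrite !lee_fin => -> ->.
have /andP[p0 pc] := part_bound w (fun=> erefl).
have /andP[n0 nc] := part_bound (fun k => - w k) (fun k => normrN _).
by rewrite /csum ler_norml; apply/andP; split; lra.
Qed.

Lemma normr_prod_le_mean_exprn (R : realType) (m : nat) (a : 'I_m -> R) :
  (0 < m)%N -> `|\prod_(i < m) a i| <= (\sum_(i < m) `|a i| ^+ m) / m%:R.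
Proof.
move=> m0.
have := (@leif_AGM R 'I_m predT (fun i => `|a i| ^+ m)
  (fun i _ => exprn_ge0 _ (normr_ge0 _))).1.
rewrite /= cardE size_enum_ord prodrXl -normr_prod ler_pXn2r // ?nnegrE //.
by rewrite divr_ge0 // sumr_ge0 // => i _; rewrite exprn_ge0.
Qed.

Lemma exprn_powRVn (R : realType) (a : R) (n : nat) : 0 <= a -> (0 < n)%N ->
  (a `^ n%:R^-1) ^+ n = a.
Proof.
move=> a0 n0.
by rewrite -powR_mulrn ?powR_ge0 // -powRrM mulVf ?powRr1 // pnatr_eq0 -lt0n.
Qed.

Section Kernel.
Variables (R : realType) (T : choiceType) (X : Type) (m : nat).

Lemma kern_diagE (phi : T -> X -> R) (x : X) :
  ~~ odd m -> ellm m (fun k => phi k x) ->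
  (kern phi (fun _ : 'I_m => x))%:E =
  (\esum_(k in [set: T]) (`|phi k x| ^+ m)%:E)%E.
Proof.
move=> m_even ell_x; rewrite /kern.
have prod_norm k : \prod_(i < m) phi k x = `|phi k x| ^+ m.
  by rewrite prodr_const card_ord -normrX ger0_norm // exprn_even_ge0.
rewrite (eq_fun prod_norm) csum_ge0E => [|k]; last exact: exprn_ge0.
rewrite fineK // ge0_fin_numE //.
by apply: esum_ge0 => k _; rewrite lee_fin exprn_ge0.
Qed.

Lemma kern_divr (phi : T -> X -> R) (c : X -> R) (xs : 'I_m -> X) :
  (forall x, 0 < c x) ->
  kern (fun k x => phi k x / c x) xs = kern phi xs / \prod_(i < m) c (xs i).
Proof.
move=> c_gt0; rewrite /kern.
under eq_fun do rewrite prodf_div mulrC.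
by rewrite csumZ ?invr_gt0 ?prodr_gt0 // mulrC.
Qed.

Lemma normr_kern_le1 (psi : T -> X -> R) (xs : 'I_m -> X) : (0 < m)%N ->
  (forall x, \esum_(k in [set: T]) (`|psi k x| ^+ m)%:E <= 1)%E ->
  `|kern psi xs| <= 1.
Proof.
move=> m_gt0 psi_le1; apply: normr_csum_le.
pose mean k := ((m%:R^-1)%:E * (\sum_(i < m) `|psi k (xs i)| ^+ m)%:E)%E.
apply: (@le_trans _ _ (\esum_(k in [set: T]) mean k)%E).
  apply: le_esum => k _; rewrite /mean -EFinM lee_fin mulrC.
  exact: normr_prod_le_mean_exprn.
rewrite esumZl ?invr_ge0 ?ler0n //; last first.
  by move=> k; rewrite lee_fin sumr_ge0 // => i _; rewrite exprn_ge0.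
under eq_esum do rewrite -sumEFin.
rewrite esum_sum; last by move=> k i _ _; rewrite lee_fin exprn_ge0.
apply: (@le_trans _ _ ((m%:R^-1)%:E * \sum_(i < m) 1)%E).
  rewrite lee_pmul2l ?lte_fin ?invr_gt0 ?ltr0n //.
  by apply: lee_sum => i _; exact: psi_le1.
by rewrite sumEFin sumr_const card_ord -EFinM mulVf ?pnatr_eq0 -?lt0n.
Qed.

End Kernel.

Theorem proposition4p5 (R : realType) (T : countType) (m : nat)
  (X : Type) (phi : T -> X -> R) :
  (2 <= m)%N -> ~~ odd m -> inhabited X ->
  (forall x : X, ellm m (fun k => phi k x)) ->
  (forall x : X, 0 < kern phi (fun _ : 'I_m => x)) ->
  exists phit : T -> X -> R,
    (forall x : X, ellm m (fun k => phit k x)) /\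
    (forall xs : 'I_m -> X, kern_tilde phi xs = kern phit xs) /\
    (forall x : X, kern_tilde phi (fun _ : 'I_m => x) = 1) /\
    (forall xs : 'I_m -> X, `|kern_tilde phi xs| <= 1).
Proof.
move=> m_ge2 m_even _ ell diag_gt0.
have m_gt0 : (0 < m)%N by apply: leq_trans m_ge2.
pose s x := kern phi (fun _ : 'I_m => x) `^ m%:R^-1.
have s_gt0 x : 0 < s x by exact: powR_gt0.
have s_exprm x : s x ^+ m = kern phi (fun _ : 'I_m => x).
  exact: exprn_powRVn (ltW (diag_gt0 x)) m_gt0.
pose phit k x := phi k x / s x.
have unit_norm x : (\esum_(k in [set: T]) (`|phit k x| ^+ m)%:E = 1)%E.
  have phit_exprm k : `|phit k x| ^+ m = (s x ^+ m)^-1 * `|phi k x| ^+ m.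
    by rewrite normrM normfV (gtr0_norm (s_gt0 x)) exprMn exprVn mulrC.
  under eq_esum do rewrite phit_exprm EFinM.
  rewrite esumZl ?invr_ge0 ?exprn_ge0 ?ltW //.
  by rewrite -kern_diagE // -EFinM s_exprm mulVf ?gt_eqF.
have tilde_phit (xs : 'I_m -> X) : kern_tilde phi xs = kern phit xs.
  by rewrite /phit kern_divr.
exists phit; split; first by move=> x; rewrite /ellm unit_norm ltry.
split; first exact: tilde_phit.
split; last by move=> xs; rewrite tilde_phit normr_kern_le1 // => x; rewrite unit_norm.
move=> x; rewrite /kern_tilde prodr_const card_ord.
by rewrite -/(s x) s_exprm divff ?gt_eqF.
Qed.
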